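(* Let $m \ge 2$ be an integer, and let $k_m$ be a number with the following property: for every integer $k \ge k_m$ and every admissible $k$-tuple $\{g_jx + h_j\}_{j=1}^k$ of linear forms in $\mathbb{Z}[x]$ with $g_1,\ldots,g_k > 0$ and $\prod_{1 \le i < j \le k}(g_ih_j - g_jh_i) \ne 0$, the set $\{g_jn + h_j\}_{j=1}^k$ contains at least $m$ primes for infinitely many $n \in \mathbb{N}$. Let $k \ge k_m$ be an integer. Let $b_1,\ldots,b_k$ be distinct integers such that the $k$-tuple $\{x + b_j\}_{j=1}^k$ is admissible, and let $g$ be any positive integer coprime with $b_1 b_2\cdots b_k$. Then there is a subset $\{h_1,\ldots,h_m\} \subseteq \{b_1,\ldots,b_k\}$ (with $m$ elements) such that for infinitely many $n \in \mathbb{N}$, the numbers $gn + h_1,\ldots,gn + h_m$ are consecutive primes (i.e., they are all prime and, listed in increasing order, no other prime lies between any two of them).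
   Context: A $k$-tuple of linear forms $\{g_jx + h_j\}_{j=1}^k$ in $\mathbb{Z}[x]$ is called admissible if the polynomial $f(x) = \prod_{j=1}^k (g_jx + h_j)$ has no fixed prime divisor, i.e. for every prime $p$, $\#\{n \bmod p : f(n) \equiv 0 \bmod p\} < p$. (By the Maynard–Tao theorem, a number $k_m$ with the stated property exists for every $m \ge 2$; e.g. any $k_m$ with $k_m \log k_m > e^{8m+4}$ works.) *)

From mathcomp Require Import all_boot all_order all_algebra.
Set Implicit Arguments. Unset Strict Implicit. Unset Printing Implicit Defensive.
Import Order.TTheory GRing.Theory Num.Theory.
Local Open Scope ring_scope.

Definition primez (x : int) : bool := (0 < x) && prime `|x|%N.

Definition prod_forms (k : nat) (g h : 'I_k -> int) (x : int) : int :=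
  \prod_(j < k) (g j * x + h j).

Definition admissible (k : nat) (g h : 'I_k -> int) : Prop :=
  forall p : nat, prime p ->
    (#|[set r : 'I_p | (p%:Z %| prod_forms g h r%:Z)%Z]| < p)%N.

Definition nprimes_in (k : nat) (g h : 'I_k -> int) (n : nat) : nat :=
  count primez (undup [seq g j * n%:Z + h j | j <- enum 'I_k]).

Definition km_property (m km : nat) : Prop :=
  forall k : nat, (km <= k)%N ->
  forall g h : 'I_k -> int,
    (forall j, 0 < g j) ->
    \prod_(i < k) \prod_(j < k | (i < j)%N) (g i * h j - g j * h i) != 0 ->
    admissible g h ->
    forall N : nat, exists2 n : nat, (N <= n)%N & (m <= nprimes_in g h n)%N.

(* Choose n = n0 + P x, so that g n = s + A x with s = g n0 and A = g P.  The shift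
   s is built so that every c with |c| <= L = sum |b_j| that is not one of the b_j has
   a divisor d_c > 1 of s + c dividing P, while d_c = 1 modulo every integer up to 2L;
   hence no prime factor of A divides any s + b_j.  Then {A x + s + b_j} is again an
   admissible tuple, so for infinitely many x at least m of the g n + b_j are prime,
   whereas every g n + c in between them is divisible by d_c <= A < g n + c.  The m
   primes with the smallest b_j are therefore consecutive, and since there are only
   finitely many subsets, one of them occurs for infinitely many n. *)

From mathcomp Require Import all_boot all_order all_algebra zify ring.
From Stdlib Require Import Classical.
Set Implicit Arguments. Unset Strict Implicit. Unset Printing Implicit Defensive.
Import Order.TTheory GRing.Theory Num.Theory.
Local Open Scope ring_scope.

Lemma eqz_mod_prod (I : finType) (d : int) (F G : I -> int) :
  (forall i, F i = G i %[mod d])%Z -> (\prod_i F i = \prod_i G i %[mod d])%Z.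
Proof.
move=> FG; apply: (big_ind2 (fun x y => (x = y %[mod d])%Z)) => // x1 x2 y1 y2 e1 e2.
by rewrite -modzMm e1 e2 modzMm.
Qed.

Lemma prime_dvdz_prod (I : finType) (P : pred I) (F : I -> int) (p : nat) :
  prime p -> (p%:Z %| \prod_(i | P i) F i)%Z -> exists2 i, P i & (p%:Z %| F i)%Z.
Proof.
move=> pp; rewrite dvdzE (big_morph absz abszM (erefl : `|1| = 1)%N) Euclid_dvd_prod //.
by elim/big_rec: _ => [|i x Pi IH] // /orP[pFi|/IH]; first exists i.
Qed.

Lemma absz_modz_lt (x : int) (p : nat) : (0 < p)%N -> (`|(x %% p%:Z)%Z| < p)%N.
Proof.
move=> p_gt0; rewrite -ltz_nat gez0_abs ?ltz_pmod ?ltz_nat //.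
by rewrite modz_ge0 // eqz_nat -lt0n.
Qed.

Lemma admissible_affine (k : nat) (b : 'I_k -> int) (A : nat) (s : int) :
  (forall p, prime p -> (p %| A)%N -> forall j, ~~ (p%:Z %| s + b j)%Z) ->
  admissible (fun _ => 1) b -> admissible (fun _ => A%:Z) (fun j => s + b j).
Proof.
move=> A_avoid adm p pp; have p_gt0 := prime_gt0 pp.
have [pA | pNA] := boolP (p %| A)%N.
  rewrite (_ : [set r | _] = set0) ?cards0 //; apply/setP => r; rewrite !inE.
  apply/negP => /(prime_dvdz_prod pp) [j _]; apply/negP.
  by rewrite rpredDl ?A_avoid // dvdz_mulr.
pose f (r : 'I_p) : 'I_p := Ordinal (absz_modz_lt (A%:Z * r%:Z + s) p_gt0).
have fE r : (f r)%:Z = ((A%:Z * r%:Z + s) %% p%:Z)%Z.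
  by rewrite /= gez0_abs // modz_ge0 // eqz_nat -lt0n.
have f_inj : injective f.
  move=> r1 r2 /(congr1 (fun r : 'I_p => r%:Z)); rewrite !fE => /eqP.
  rewrite eqz_modDr eqz_mod_dvd -mulrBr Gauss_dvdzr; last by rewrite coprimezE /= prime_coprime.
  rewrite -eqz_mod_dvd !modz_small ?ltz_nat ?ltn_ord // => /eqP[]; exact: val_inj.
rewrite -(card_imset _ f_inj); apply: leq_ltn_trans (adm p pp); apply: subset_leq_card.
apply/subsetP => _ /imsetP [r + ->]; rewrite !inE /prod_forms => /dvdz_mod0P root.
apply/dvdz_mod0P; rewrite -root; apply: eqz_mod_prod => j.
by rewrite fE mul1r modzDml addrA.
Qed.

Lemma prod_pairwise_affine_neq0 (k : nat) (b : 'I_k -> int) (A s : int) :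
  injective b -> A != 0 ->
  \prod_(i < k) \prod_(j < k | (i < j)%N) (A * (s + b j) - A * (s + b i)) != 0.
Proof.
move=> b_inj A_neq0; apply/prodf_neq0 => i _; apply/prodf_neq0 => j ij.
rewrite -mulrBr opprD addrACA subrr add0r mulf_neq0 // subr_eq0.
by apply: contraTneq ij => /b_inj ->; rewrite ltnn.
Qed.

Lemma infinitely_often_pigeonhole (T : eqType) (xs : seq T) (P : T -> nat -> Prop) :
  (forall N, exists2 n, (N <= n)%N & exists2 x, x \in xs & P x n) ->
  exists2 x, x \in xs & forall N, exists2 n, (N <= n)%N & P x n.
Proof.
elim: xs => [|x xs IH] often; first by have [n _ [x]] := often 0%N.
have [x_often | x_rare] := classic (forall N, exists2 n, (N <= n)%N & P x n).
  by exists x; rewrite ?mem_head.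
have [N0 N0_rare] : exists N0, forall n, (N0 <= n)%N -> ~ P x n.
  apply: NNPP => no_bound; apply: x_rare => N; apply: NNPP => no_n.
  by apply: no_bound; exists N => n Nn Pxn; apply: no_n; exists n.
have [|y y_xs y_often] := IH; last by exists y; rewrite ?inE ?y_xs ?orbT.
move=> N; have [n] := often (maxn N N0); rewrite geq_max => /andP[Nn N0n].
case=> y; rewrite inE => /orP[/eqP-> /(N0_rare _ N0n) // | y_xs Pyn].
by exists n => //; exists y.
Qed.

Lemma nat_discrete_ivt (f : nat -> nat) (m K : nat) :
  (f 0 <= m <= f K)%N -> (forall i, f i.+1 <= (f i).+1)%N -> exists i, f i = m.
Proof.
move=> /andP[f0m mfK] f_step; elim: K mfK => [|K IH] mfK.
  by exists 0%N; apply/eqP; rewrite eqn_leq f0m mfK.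
have [mfK' | fKm] := leqP m (f K); first exact: IH.
by exists K.+1; apply/eqP; rewrite eqn_leq mfK (leq_trans (f_step K)).
Qed.

Lemma card_below_succ (I : finType) (b : I -> int) (T : {set I}) (t : int) :
  injective b ->
  (#|[set j in T | (b j < t + 1)%R]| <= #|[set j in T | (b j < t)%R]|.+1)%N.
Proof.
move=> b_inj; have at_most_one : (#|[set j | b j == t]| <= 1)%N.
  by apply/card_le1_eqP => i j; rewrite !inE => /eqP <- /eqP /b_inj.
rewrite -addn1; apply: leq_trans (leq_add (leqnn _) at_most_one).
apply: leq_trans (leq_card_setU _ _); apply: subset_leq_card; apply/subsetP => j.
by rewrite !inE => /andP[-> ]; rewrite ltzD1 le_eqVlt orbC.
Qed.

Lemma card_below_threshold (I : finType) (b : I -> int) (T : {set I}) (m : nat) :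
  injective b -> (m <= #|T|)%N -> exists t : int, #|[set j in T | (b j < t)%R]| = m.
Proof.
move=> b_inj mT; pose L := (\sum_j `|b j|)%N.
have bL j : (`|b j| <= L)%N by rewrite /L (bigD1 j) //= leq_addr.
pose below (i : nat) := #|[set j in T | (b j < i%:Z - L%:Z)%R]|.
suff [i <-] : exists i, below i = m by exists (i%:Z - L%:Z).
apply: (@nat_discrete_ivt below m (2 * L).+1); last first.
  move=> i; rewrite /below (_ : i.+1%:Z - L%:Z = i%:Z - L%:Z + 1).
    exact: card_below_succ.
  by rewrite -addn1 PoszD addrAC.
apply/andP; split.
  rewrite /below (_ : [set j in T | _] = set0) ?cards0 //; apply/setP => j.
  by rewrite !inE; have := bL j; lia.
apply: leq_trans mT (subset_leq_card _); apply/subsetP => j jT.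
by rewrite !inE jT /=; have := bL j; lia.
Qed.

Definition consecutive_primes (I : finType) (b : I -> int) (S : {set I}) (v : int) :=
  (forall j, j \in S -> primez (v + b j)) /\
  (forall i j, i \in S -> j \in S -> forall q : int, primez q ->
     v + b i <= q -> q <= v + b j -> exists2 l, l \in S & q = v + b l).

Lemma consecutive_primes_below_threshold (I : finType) (b : I -> int) (v : int) (m : nat) :
  injective b ->
  (forall i j c, b i <= c <= b j -> c \notin codom b -> ~~ primez (v + c)) ->
  (m <= #|[set j | primez (v + b j)]|)%N ->
  exists S : {set I}, #|S| = m /\ consecutive_primes b S v.
Proof.
move=> b_inj gaps_composite mT; have [t St] := card_below_threshold b_inj mT.
exists [set j in [set j | primez (v + b j)] | (b j < t)%R]; split=> //; split.
  by move=> j; rewrite !inE => /andP[].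
move=> i j; rewrite !inE => /andP[_ _] /andP[_ bjt] q q_prime iq qj.
have vq : v + (q - v) = q by rewrite addrC subrK.
have [/codomP[l ql] | gap] := boolP (q - v \in codom b).
  exists l; rewrite ?inE -ql ?vq // q_prime /=.
  by apply: le_lt_trans bjt; rewrite lerBlDl.
have bounds : b i <= q - v <= b j by rewrite lerBrDl lerBlDl iq.
by have := gaps_composite _ _ _ bounds gap; rewrite vq q_prime.
Qed.

Lemma dvdz_not_primez (d : nat) (q : int) :
  (1 < d)%N -> (d%:Z %| q)%Z -> d%:Z < q -> ~~ primez q.
Proof.
move=> d_gt1 dq dlt; apply/negP => /andP[q_gt0 q_prime].
move: dq; rewrite dvdzE /= => /(prime_nt_dvdP q_prime); rewrite neq_ltn d_gt1 orbT.
by move=> /(_ isT) d_q; move: dlt; rewrite d_q gtz0_abs // ltxx.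
Qed.

Lemma nprimes_in_le_card (k : nat) (g h : 'I_k -> int) (n : nat) :
  (nprimes_in g h n <= #|[set j | primez (g j * n%:Z + h j)]|)%N.
Proof.
apply: leq_trans (count_undup _ _) _; rewrite count_map cardsE cardE /enum_mem.
by rewrite size_filter (@eq_filter _ _ predT) // filter_predT.
Qed.

Definition int_ball (L : nat) : seq int := [seq i%:Z - L%:Z | i <- iota 0 (2 * L).+1].

Lemma mem_int_ball (L : nat) (c : int) : (c \in int_ball L) = (`|c| <= L)%N.
Proof.
apply/mapP/idP => [[i] | cL]; first by rewrite mem_iota => /andP[_ iL] ->; lia.
by exists `|(c + L%:Z)%R|%N; [rewrite mem_iota; lia | lia].
Qed.

Section GapCovering.

Variables (I : finType) (b : I -> int) (L g : nat).
Hypotheses (bL : forall j, (`|b j| <= L)%N) (g_gt0 : (0 < g)%N).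

Definition gap_modulus : nat := ((2 * L).+3)`!.
Local Notation M := gap_modulus.

Definition gap_shift : nat := (M ^ 2 * M.+1)%N.
Local Notation s := (g * gap_shift)%N%:Z.

(* For c != 0, c * gap_divisor c = s + c and gap_divisor c = 1 modulo M. *)
Definition gap_divisor (c : int) : int :=
  if c == 0 then M.+1%:Z else 1 + (s %/ c)%Z.

Definition gap_product : nat :=
  (\prod_(c <- int_ball L | c \notin codom b) `|gap_divisor c|)%N.

Lemma dvdn_gap_modulus (e : nat) : (0 < e <= (2 * L).+3)%N -> (e %| M)%N.
Proof. by case/andP=> e_gt0 eL; apply: dvdn_fact; rewrite e_gt0. Qed.

Lemma gap_modulus_ge3 : (3 <= M)%N.
Proof. by apply: leq_trans (fact_geq _); rewrite ltnS. Qed.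

Lemma gap_shift_gt0 : (0 < gap_shift)%N.
Proof. by rewrite muln_gt0 expn_gt0 fact_gt0. Qed.

Lemma dvdz_gap_shift (c : int) : c != 0 -> (`|c| <= L)%N -> (c * M%:Z %| s)%Z.
Proof.
move=> c_neq0 cL; rewrite dvdzE abszM /= dvdn_mull // dvdn_mulr //.
by rewrite expnS expn1 dvdn_mul // dvdn_gap_modulus // absz_gt0 c_neq0 /=; lia.
Qed.

Lemma gap_divisor_dvd (c : int) : (`|c| <= L)%N -> (gap_divisor c %| s + c)%Z.
Proof.
rewrite /gap_divisor; case: eqP => [-> _ | /eqP c_neq0 cL].
  by rewrite addr0 dvdzE /= dvdn_mull // dvdn_mull.
have /dvdzP[w ->] := dvdz_gap_shift c_neq0 cL.
rewrite (_ : w * (c * M%:Z) = w * M%:Z * c) ?mulzK //; last by ring.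
by apply/dvdzP; exists c; ring.
Qed.

Lemma gap_divisorE (c : int) : (`|c| <= L)%N ->
  exists2 w : int, w != 0 & gap_divisor c = 1 + w * M%:Z.
Proof.
rewrite /gap_divisor; case: eqP => [_ _ | /eqP c_neq0 cL].
  by exists 1; rewrite ?mul1r // -add1n PoszD.
have /dvdzP[w s_eq] := dvdz_gap_shift c_neq0 cL.
exists w; last by rewrite s_eq mulrCA mulrC mulzK // mulrC.
apply/eqP => w0; move: s_eq; rewrite w0 mul0r => /eqP; apply/negP.
by rewrite eqz_nat -lt0n muln_gt0 g_gt0 gap_shift_gt0.
Qed.

Lemma gap_divisor_gt1 (c : int) : (`|c| <= L)%N -> (1 < `|gap_divisor c|)%N.
Proof.
by move=> /gap_divisorE[w w_neq0 ->]; have := gap_modulus_ge3; nia.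
Qed.

Lemma gap_divisor_coprime (c : int) (p : nat) (j : I) :
  (`|c| <= L)%N -> c \notin codom b -> prime p ->
  (p%:Z %| gap_divisor c)%Z -> ~~ (p%:Z %| s + b j)%Z.
Proof.
move=> cL gap p_prime p_d; apply/negP => p_sbj.
have p_bjc : (p%:Z %| b j - c)%Z.
  rewrite (_ : b j - c = (s + b j) - (s + c)); last by ring.
  by rewrite rpredB // (dvdz_trans p_d) ?gap_divisor_dvd.
have bjc_neq0 : b j - c != 0.
  by rewrite subr_eq0; apply: contraNneq gap => <-; apply: codom_f.
have p_M : (p %| M)%N.
  apply: dvdn_gap_modulus; rewrite prime_gt0 //=.
  move: p_bjc; rewrite dvdzE /= => /dvdn_leq; rewrite absz_gt0 bjc_neq0.
  by have := bL j; lia.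
have [w _ d_eq] := gap_divisorE cL.
have : (p%:Z %| gap_divisor c - w * M%:Z)%Z by rewrite rpredB // dvdz_mull.
by rewrite d_eq addrK dvdz1 => /eqP /= p1; rewrite p1 in p_prime.
Qed.

Lemma gap_product_gt0 : (0 < gap_product)%N.
Proof.
rewrite /gap_product big_seq_cond; apply: prodn_cond_gt0 => c /andP[].
by rewrite mem_int_ball => /gap_divisor_gt1 /ltnW.
Qed.

Lemma gap_divisor_dvd_product (c : int) :
  (`|c| <= L)%N -> c \notin codom b -> (`|gap_divisor c| %| gap_product)%N.
Proof. by move=> cL gap; rewrite /gap_product (big_rem c) ?mem_int_ball //= gap dvdn_mulr. Qed.

Lemma prime_dvd_gap_product (p : nat) (j : I) :
  prime p -> (p %| gap_product)%N -> ~~ (p%:Z %| s + b j)%Z.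
Proof.
move=> p_prime; rewrite /gap_product big_seq_cond Euclid_dvd_prod //.
elim/big_rec: _ => [//|c x /andP[c_ball gap] IH /orP[p_d | /IH//]].
by apply: gap_divisor_coprime p_d; rewrite -?mem_int_ball.
Qed.

Lemma gap_tuple_consecutive_primes (m x : nat) :
  injective b -> (L.+1 < x)%N ->
  (m <= #|[set j | primez ((g * gap_product)%N%:Z * x%:Z + (s + b j))]|)%N ->
  exists S : {set I}, #|S| = m /\
    consecutive_primes b S (g%:Z * (gap_shift + gap_product * x)%N%:Z).
Proof.
move=> b_inj xL mT; set P := gap_product; set A := (g * P)%N.
have -> : g%:Z * (gap_shift + P * x)%N%:Z = s + A%:Z * x%:Z.
  by rewrite /A !PoszD !PoszM; ring.
apply: consecutive_primes_below_threshold => // [i j c /andP[ic cj] gap|]; last first.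
  by apply: leq_trans mT (eq_leq (eq_card _)) => j; rewrite !inE addrA [s + _]addrC.
have cL : (`|c| <= L)%N by have := bL i; have := bL j; lia.
have d_le : (`|gap_divisor c| <= P)%N.
  exact: dvdn_leq gap_product_gt0 (gap_divisor_dvd_product cL gap).
apply: (dvdz_not_primez (gap_divisor_gt1 cL)).
  rewrite addrAC rpredD ?dvdz_mulr //; first by rewrite dvdzE /= -dvdzE gap_divisor_dvd.
  by rewrite dvdzE /= dvdn_mull ?gap_divisor_dvd_product.
have A_gt0 : (0 < A)%N by rewrite muln_gt0 g_gt0 gap_product_gt0.
have Ax : (A + L < A * x)%N.
  by apply: leq_trans (leq_mul (leqnn A) xL); nia.
have := leq_pmull P g_gt0; rewrite -/A -PoszM; lia.
Qed.

End GapCovering.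

Lemma prime_dvd_coprime_shift (k : nat) (b : 'I_k -> int) (g n0 p : nat) (j : 'I_k) :
  gcdz g%:Z (\prod_(i < k) b i) = 1%N -> prime p -> (p %| g)%N ->
  ~~ (p%:Z %| (g * n0)%N%:Z + b j)%Z.
Proof.
move=> g_coprime p_prime p_g; rewrite rpredDl; last by rewrite dvdzE /= dvdn_mulr.
apply/negP => p_bj; have : (p%:Z %| gcdz g%:Z (\prod_(i < k) b i))%Z.
  by rewrite dvdz_gcd dvdzE p_g /= (bigD1 j) //= dvdz_mulr.
by rewrite g_coprime dvdzE /= dvdn1 => /eqP p1; rewrite p1 in p_prime.
Qed.

Theorem theorem1 (m km : nat) (hm : (2 <= m)%N) (hkm : km_property m km)
  (k : nat) (hk : (km <= k)%N) (b : 'I_k -> int) (hb : injective b)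
  (hadm : admissible (fun _ => 1) b)
  (g : nat) (hg : (0 < g)%N) (hcop : gcdz g%:Z (\prod_(j < k) b j) = 1%N) :
  exists S : {set 'I_k}, #|S| = m /\
    forall N : nat, exists2 n : nat, (N <= n)%N &
      (forall j, j \in S -> primez (g%:Z * n%:Z + b j)) /\
      (forall i j, i \in S -> j \in S -> forall q : int, primez q ->
          g%:Z * n%:Z + b i <= q -> q <= g%:Z * n%:Z + b j ->
          exists2 l, l \in S & q = g%:Z * n%:Z + b l).
Proof.
pose L := (\sum_j `|b j|)%N.
have bL j : (`|b j| <= L)%N by rewrite /L (bigD1 j) //= leq_addr.
pose P := gap_product b L g; pose s := (g * gap_shift L)%N%:Z.
have P_gt0 : (0 < P)%N by apply: gap_product_gt0.
have adm : admissible (fun _ => (g * P)%N%:Z) (fun j => s + b j).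
  apply: admissible_affine hadm => p p_prime; rewrite Euclid_dvdM // => /orP[p_g | p_P] j.
    exact: prime_dvd_coprime_shift.
  exact: prime_dvd_gap_product.
have A_gt0 : 0 < (g * P)%N%:Z by rewrite ltz_nat muln_gt0 hg P_gt0.
have often := hkm k hk _ _ (fun=> A_gt0) (prod_pairwise_affine_neq0 s hb (lt0r_neq0 A_gt0)) adm.
have [|S _ S_often] := @infinitely_often_pigeonhole _ (enum {set 'I_k})
    (fun S n => #|S| = m /\ consecutive_primes b S (g%:Z * n%:Z)).
  move=> N; have [x Nx mx] := often (maxn N L.+2); rewrite geq_max in Nx.
  case/andP: Nx => Nx xL; have mT := leq_trans mx (nprimes_in_le_card _ _ _).
  have [S S_cons] := gap_tuple_consecutive_primes bL hg hb xL mT.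
  exists (gap_shift L + P * x)%N; last by exists S; rewrite ?mem_enum.
  by rewrite (leq_trans Nx) // (leq_trans (leq_pmull x P_gt0)) ?leq_addl.
exists S; split; first by have [n _ []] := S_often 0%N.
by move=> N; have [n Nn [_ S_cons]] := S_often N; exists n.
Qed.
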